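(* Let $K_1,K_2,t$ be positive integers with $K_2<t<K_1K_2$, let $N\ge K_1K_2$, and let $M_1,M_2$ satisfy $$\frac{M_1}{N}=\frac{\binom{K_1K_2-K_2}{t-K_2}}{\binom{K_1K_2}{t}},\qquad \frac{M_2}{N}=\frac{t}{K_1K_2}-\frac{\binom{K_1K_2-K_2}{t-K_2}}{\binom{K_1K_2}{t}}.$$ Then the optimal first-layer load under uncoded placement of the $(K_1,K_2;M_1,M_2;N)$ hierarchical caching system is $$R_1^*=\frac{K_1K_2\left(1-\frac{M_1+M_2}{N}\right)}{K_1K_2\frac{M_1+M_2}{N}+1}=\frac{K_1K_2-t}{t+1}.$$
   Context: Notation: $[a]=\{1,\ldots,a\}$. Hierarchical caching model $(K_1,K_2;M_1,M_2;N)$. A server stores $N$ independent files $W_1,\ldots,W_N$, each uniformly distributed on $B$ bits. There are $K_1$ mirror sites, each with a cache of $M_1B$ bits, and $K_1K_2$ users $U_{k_1,k_2}$ ($k_1\in[K_1]$, $k_2\in[K_2]$), each with a cache of $M_2B$ bits; user $U_{k_1,k_2}$ is attached to mirror site $k_1$. The server reaches all mirror sites through one error-free broadcast link; mirror site $k_1$ reaches its $K_2$ attached users through an error-free broadcast link. A scheme with uncoded placement: in the placement phase (without knowledge of demands) each mirror site $k_1$ stores a subset $\mathcal{Z}_{k_1}$ of the bits of the files, of size at most $M_1B$ bits, and each user $U_{k_1,k_2}$ stores a subset $\mathcal{Z}_{(k_1,k_2)}$ of the bits of the files, of size at most $M_2B$ bits. In the delivery phase, given a demand vector $\mathbf{d}=(d_{k_1,k_2})\in[N]^{K_1K_2}$,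 the server broadcasts to the mirror sites a message $X$ (a function of the files and $\mathbf{d}$) of length $L(\mathbf{d})$ bits; each mirror site $k_1$ broadcasts to its attached users a message $X_{k_1}$ that is a function of $X$, $\mathcal{Z}_{k_1}$ and $\mathbf{d}$; each user $U_{k_1,k_2}$ must recover $W_{d_{k_1,k_2}}$ from $X_{k_1}$, $\mathcal{Z}_{(k_1,k_2)}$ and $\mathbf{d}$. The first-layer load is $R_1=\max_{\mathbf{d}\in[N]^{K_1K_2}}L(\mathbf{d})/B$. The optimal first-layer load under uncoded placement $R_1^*$ is the infimum of $R_1$ over all file sizes $B$ and all such schemes with uncoded placement in which every user decodes correctly. *)

From HB Require Import structures.
From mathcomp Require Import all_boot all_order all_algebra.
From mathcomp Require Import boolp classical_sets reals.
Set Implicit Arguments. Unset Strict Implicit. Unset Printing Implicit Defensive.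
Import Order.TTheory GRing.Theory Num.Theory.
Local Open Scope ring_scope.
Local Open Scope classical_set_scope.

(* A realisation of the N files W_1..W_N of B bits each: bit (n, b) of the
   library.  Files are indexed by 'I_N (= [N] shifted by one), bits by 'I_B. *)
Definition files (N B : nat) := {ffun 'I_N * 'I_B -> bool}.

Definition demand (K1 K2 N : nat) := {ffun 'I_K1 * 'I_K2 -> 'I_N}.

Definition depends_only_on (N B : nat) (T : Type) (Z : {set 'I_N * 'I_B})
  (f : files N B -> T) : Prop :=
  forall w w' : files N B, (forall p, p \in Z -> w p = w' p) -> f w = f w'.

(* A (zero-error) hierarchical caching scheme with uncoded placement for the
   (K1,K2;M1,M2;N) system, with file size B, achieving first-layer load r:
   - Z1 k1       : bits stored at mirror k1 (at most M1*B bits),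
   - Z2 k1 k2    : bits stored at user U_{k1,k2} (at most M2*B bits),
   - X d w       : server broadcast, of length L d bits,
   - Y d k1 x w  : mirror k1's broadcast, a function of x = X, of its cache
                   content (depends only on bits in Z1 k1) and of d,
   - D d k1 k2 y w : decoder of U_{k1,k2}, a function of y = X_{k1}, of its
                   cache content (bits in Z2 k1 k2) and of d,
   and r = max_d L(d) / B. *)
Definition achievable_load {R : realType} (K1 K2 N : nat) (M1 M2 : R)
    (r : R) : Prop :=
  exists B : nat, (0 < B)%N /\
  exists (Z1 : 'I_K1 -> {set 'I_N * 'I_B})
         (Z2 : 'I_K1 -> 'I_K2 -> {set 'I_N * 'I_B})
         (L : demand K1 K2 N -> nat)
         (X : demand K1 K2 N -> files N B -> seq bool)
         (Y : demand K1 K2 N -> 'I_K1 -> seq bool -> files N B -> seq bool)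
         (D : demand K1 K2 N -> 'I_K1 -> 'I_K2 -> seq bool -> files N B ->
                {ffun 'I_B -> bool}),
       (forall k1, (#|Z1 k1|%:R : R) <= M1 * B%:R) /\
        (forall k1 k2, (#|Z2 k1 k2|%:R : R) <= M2 * B%:R) /\
        (forall d w, size (X d w) = L d) /\
        (forall d k1 x, depends_only_on (Z1 k1) (Y d k1 x)) /\
        (forall d k1 k2 y, depends_only_on (Z2 k1 k2) (D d k1 k2 y)) /\
        (forall d w k1 k2,
            D d k1 k2 (Y d k1 (X d w) w) w = [ffun b => w (d (k1, k2), b)]) /\
        r = (\max_(d : demand K1 K2 N) L d)%N%:R / B%:R.

Definition R1_star {R : realType} (K1 K2 N : nat) (M1 M2 : R) : R :=
  inf [set r : R | achievable_load K1 K2 N M1 M2 r].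

(* Achievability: split each file into C(K, t) subfiles, here single bits, labelled
   by the t-subsets of the K = K1 K2 users.  Mirror k1 stores the subfiles whose
   label contains its whole cluster, user (k1, k2) the other subfiles whose label
   contains it.  For each (t+1)-subset Q the server sends the XOR over u in Q of
   subfile Q \ u of file d_u, and every mirror forwards it together with its cache;
   user u recovers subfile T of its file, u not in T, from the XOR for Q = u :|: T,
   since it holds all the other summands.  The load is C(K, t+1) / C(K, t), which is
   (K - t) / (t + 1).

   Converse: for distinct demands and an ordering of the users, the server message
   together with the genie bits (the bits of each demanded file d_v cached by some
   user not later than v) determines all demanded files, so K B <= L(d) + #genie.
   Averaging over the N cyclic shifts of the demands and over all orderings, a bit
   cached by s users is a genie bit for s (K + 1) / (s + 1) users on average.  This
   is concave in s and the caches hold at most N B t bits in total, hence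
   L / B >= K - t (K + 1) / (t + 1) = (K - t) / (t + 1). *)

From HB Require Import structures.
From mathcomp Require Import all_boot all_order all_algebra all_fingroup.
From mathcomp Require Import boolp classical_sets reals.
From mathcomp Require Import zify ring lra.
Set Implicit Arguments. Unset Strict Implicit. Unset Printing Implicit Defensive.
Import Order.TTheory GRing.Theory Num.Theory.

Lemma sum_nat_of_bool (T : finType) (P : pred T) :
  \sum_x (P x : nat) = #|[set x | P x]|.
Proof. by rewrite -sum1dep_card [RHS]big_mkcond. Qed.

Lemma leq_card_bitseq (T : finType) (n : nat) (f : T -> seq bool) :
  (forall x, size (f x) = n) -> injective f -> #|T| <= 2 ^ n.
Proof.
move=> size_f inj_f.
pose g x : {ffun 'I_n -> bool} := [ffun i : 'I_n => nth false (f x) i].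
have inj_g : injective g.
  move=> x y /ffunP gxy; apply: inj_f.
  apply: (eq_from_nth (x0 := false)) => [|i]; first by rewrite !size_f.
  by rewrite size_f => lt_i_n; have := gxy (Ordinal lt_i_n); rewrite !ffunE.
by have := leq_card g inj_g; rewrite card_ffun card_bool card_ord.
Qed.

Lemma card_supsets (T : finType) (A : {set T}) m : #|A| <= m <= #|T| ->
  #|[set X : {set T} | A \subset X & #|X| == m]| = 'C(#|T| - #|A|, m - #|A|).
Proof.
case/andP=> le_A_m le_m_T.
rewrite -(card_imset _ (@finset.setC_inj T)).
have -> : [set ~: X | X in [set X : {set T} | A \subset X & #|X| == m]]
        = [set Y : {set T} | Y \subset ~: A & #|Y| == #|T| - m].
  apply/setP => Y; rewrite inE; apply/imsetP/andP => [[X] | [sub_Y_CA /eqP card_Y]].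
    rewrite inE => /andP[sub_A_X /eqP card_X] ->.
    by rewrite finset.setCS sub_A_X -card_X -(cardsC X) addKn.
  exists (~: Y); last by rewrite finset.setCK.
  rewrite inE -finset.setCS finset.setCK sub_Y_CA /=.
  by have := cardsC Y; rewrite card_Y => ?; apply/eqP; lia.
have card_CA : #|~: A| = #|T| - #|A| by have := cardsC A; lia.
by rewrite cards_draws card_CA -bin_sub; [congr 'C(_, _); lia | lia].
Qed.

Lemma card_enum_val_pred (T : finType) (A : {set T}) (P : pred T) :
  #|[set i : 'I_#|A| | P (enum_val i)]| = #|[set x in A | P x]|.
Proof.
rewrite -(card_imset _ enum_val_inj); apply: eq_card => x.
apply/imsetP/idP => [[i] | ]; first by rewrite !inE => Pi ->; rewrite enum_valP.
rewrite inE => /andP[xA Px]; exists (enum_rank_in xA x); last by rewrite enum_rankK_in.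
by rewrite inE enum_rankK_in.
Qed.

Section Scheme.
Variables (K1 K2 t N : nat).
Notation U := ('I_K1 * 'I_K2)%type.

Definition labels : {set {set U}} := [set T : {set U} | #|T| == t].
Definition coded_labels : {set {set U}} := [set Q : {set U} | #|Q| == t.+1].

Notation B := #|labels|.

Definition label (b : 'I_B) : {set U} := enum_val b.

Definition cluster (k1 : 'I_K1) : {set U} := [set u : U | u.1 == k1].

Definition mirror_cache k1 : {set 'I_N * 'I_B} :=
  [set p | cluster k1 \subset label p.2].

Definition user_cache k1 k2 : {set 'I_N * 'I_B} :=
  [set p | ((k1, k2) \in label p.2) && ~~ (cluster k1 \subset label p.2)].

Lemma card_labels : B = 'C(K1 * K2, t).
Proof. by rewrite card_draws card_prod !card_ord. Qed.

Lemma card_coded_labels : #|coded_labels| = 'C(K1 * K2, t.+1).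
Proof. by rewrite card_draws card_prod !card_ord. Qed.

Lemma card_cluster k1 : #|cluster k1| = K2.
Proof.
have -> : cluster k1 = finset.setX [set k1] [set: 'I_K2].
  by apply/setP => -[a b]; rewrite !inE andbT.
by rewrite cardsX cards1 cardsT card_ord mul1n.
Qed.

Lemma card_labels_supsets (A : {set U}) : #|A| <= t <= K1 * K2 ->
  #|[set b : 'I_B | A \subset label b]| = 'C(K1 * K2 - #|A|, t - #|A|).
Proof.
have card_U : #|{: U}| = K1 * K2 by rewrite card_prod !card_ord.
rewrite -card_U => bounds.
rewrite (card_enum_val_pred labels (fun T => A \subset T)) -card_supsets //.
by apply: eq_card => T; rewrite !inE andbC.
Qed.

Lemma mirror_cacheE k1 :
  mirror_cache k1 = finset.setX [set: 'I_N] [set b | cluster k1 \subset label b].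
Proof. by apply/setP => -[n b]; rewrite !inE. Qed.

Lemma user_cacheE k1 k2 : user_cache k1 k2 = finset.setX [set: 'I_N]
  [set b | ((k1, k2) \in label b) && ~~ (cluster k1 \subset label b)].
Proof. by apply/setP => -[n b]; rewrite !inE. Qed.

Lemma card_mirror_cache k1 : K2 <= t <= K1 * K2 ->
  #|mirror_cache k1| = N * 'C(K1 * K2 - K2, t - K2).
Proof.
move=> bounds.
by rewrite mirror_cacheE cardsX cardsT card_ord card_labels_supsets card_cluster.
Qed.

Lemma card_user_cache k1 k2 : K2 <= t <= K1 * K2 -> 0 < t ->
  #|user_cache k1 k2| + N * 'C(K1 * K2 - K2, t - K2) = N * 'C(K1 * K2 - 1, t - 1).
Proof.
move=> bounds t_gt0; rewrite -(card_mirror_cache k1) //.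
rewrite user_cacheE mirror_cacheE !cardsX cardsT card_ord -mulnDr.
rewrite -(cards1 (k1, k2)) -card_labels_supsets ?cards1; last by lia.
set has_cluster := [set b | cluster k1 \subset label b].
rewrite -(cardsID has_cluster [set b | [set (k1, k2)] \subset label b]) addnC.
congr (_ * (_ + _)).
  apply: eq_card => b; rewrite !inE.
  case: (boolP (_ \subset _)) => [sub | _]; rewrite ?andbF // andbT.
  by rewrite finset.sub1set (fintype.subsetP sub) // !inE eqxx.
by apply: eq_card => b; rewrite !inE finset.sub1set andbC.
Qed.

Variables (T0 : {set U}) (T0_label : T0 \in labels).

Definition label_index (T : {set U}) : 'I_B := enum_rank_in T0_label T.

Lemma label_indexK T : T \in labels -> label (label_index T) = T.
Proof. exact: enum_rankK_in. Qed.

Lemma labelK b : label_index (label b) = b.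
Proof. exact: enum_valK_in. Qed.

Lemma card_label b : #|label b| = t.
Proof. by have := enum_valP b; rewrite inE => /eqP. Qed.

Definition server_msg (d : demand K1 K2 N) (w : files N B) : seq bool :=
  [seq \big[addb/false]_(u in Q) w (d u, label_index (Q :\ u))
  | Q : {set U} <- enum coded_labels].

Definition mirror_msg (_ : demand K1 K2 N) k1 (x : seq bool) (w : files N B) :=
  x ++ [seq w p | p <- enum (mirror_cache k1)].

(* y is the mirror's message: the server message followed by the mirror cache. *)
Definition user_view k1 k2 (y : seq bool) (w : files N B) (p : 'I_N * 'I_B) :=
  if p \in user_cache k1 k2 then w p
  else nth false (drop #|coded_labels| y) (index p (enum (mirror_cache k1))).

Definition user_decode (d : demand K1 K2 N) k1 k2 (y : seq bool) (w : files N B) :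
    {ffun 'I_B -> bool} :=
  let u := (k1, k2) in let v := user_view k1 k2 y w in
  [ffun b => if u \in label b then v (d u, b) else
     nth false y (index (u |: label b) (enum coded_labels)) (+)
     \big[addb/false]_(u' in (u |: label b) :\ u)
        v (d u', label_index ((u |: label b) :\ u'))].

Lemma size_server_msg d w : size (server_msg d w) = #|coded_labels|.
Proof. by rewrite size_map -cardE. Qed.

Lemma mirror_msg_local d k1 x : depends_only_on (mirror_cache k1) (mirror_msg d k1 x).
Proof.
by move=> w w' eq_w; congr (_ ++ _); apply/eq_in_map => p; rewrite mem_enum => /eq_w.
Qed.

Lemma user_decode_local d k1 k2 y :
  depends_only_on (user_cache k1 k2) (user_decode d k1 k2 y).
Proof.
move=> w w' eq_w; rewrite /user_decode.
suff -> : user_view k1 k2 y w = user_view k1 k2 y w' by [].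
by apply: funext => p; rewrite /user_view; case: ifP => // /eq_w.
Qed.

Lemma user_viewE d k1 k2 w p : p \in mirror_cache k1 :|: user_cache k1 k2 ->
  user_view k1 k2 (mirror_msg d k1 (server_msg d w) w) w p = w p.
Proof.
rewrite /user_view inE => /orP[cached | ->] //; case: ifP => // _.
rewrite drop_size_cat ?size_server_msg // (nth_map p) ?index_mem ?mem_enum //.
by rewrite nth_index ?mem_enum.
Qed.

Lemma cached_of_label k1 k2 n b : (k1, k2) \in label b ->
  (n, b) \in mirror_cache k1 :|: user_cache k1 k2.
Proof. by move=> ub; rewrite !inE /= ub; case: (_ \subset _). Qed.

Lemma user_decode_correct d w k1 k2 :
  user_decode d k1 k2 (mirror_msg d k1 (server_msg d w) w) w
  = [ffun b => w (d (k1, k2), b)].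
Proof.
apply/ffunP => b; rewrite !ffunE; set u := (k1, k2).
case: ifP => ub; first by rewrite user_viewE // cached_of_label.
set Q := u |: label b.
have QP : Q \in coded_labels by rewrite inE cardsU1 ub card_label.
have uQ : u \in Q by rewrite setU11.
rewrite /mirror_msg nth_cat size_server_msg [#|coded_labels|]cardE index_mem mem_enum QP.
rewrite (nth_map Q) ?index_mem ?mem_enum // nth_index ?mem_enum //.
rewrite (bigD1 u) //= {1}/Q setU1K ?ub // labelK.
set lhs := \big[addb/false]_(i in Q | i != u) _.
set rhs := \big[addb/false]_(u' in label b) _.
suff -> : lhs = rhs by rewrite -addbA addbb addbF.
apply: eq_big => [u' | u' /andP[u'Q u'u]].
  by rewrite /Q in_setU1; case: eqP => [-> | _]; rewrite ?ub ?andbT ?andbF.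
have label_u' : Q :\ u' \in labels.
  by move: QP; rewrite !inE (cardsD1 u') u'Q add1n eqSS.
by rewrite user_viewE // cached_of_label // label_indexK // in_setD1 eq_sym u'u.
Qed.

Lemma scheme_achievable (R : realType) (M1 M2 : R) : 0 < N ->
  (forall k1, (#|mirror_cache k1|%:R : R) <= M1 * B%:R)%R ->
  (forall k1 k2, (#|user_cache k1 k2|%:R : R) <= M2 * B%:R)%R ->
  achievable_load K1 K2 N M1 M2 (#|coded_labels|%:R / B%:R)%R.
Proof.
move=> N_gt0 mirror_fits user_fits.
exists B; split; first by apply/card_gt0P; exists T0.
exists mirror_cache, user_cache, (fun _ => #|coded_labels|).
exists server_msg, mirror_msg, user_decode.
split; first exact: mirror_fits.
split; first exact: user_fits.
split; first exact: size_server_msg.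
split; first exact: mirror_msg_local.
split; first exact: user_decode_local.
split; first exact: user_decode_correct.
congr (_%:R / _)%R; apply/eqP; rewrite eqn_leq; apply/andP; split; last first.
  by apply/bigmax_leqP.
exact: (leq_bigmax [ffun _ => Ordinal N_gt0]).
Qed.
End Scheme.

Section Orderings.
Variable U : finType.

Definition rank (pi : {perm U}) (u : U) : nat := enum_rank (pi u).

Lemma rank_inj pi : injective (rank pi).
Proof. by move=> u v /val_inj/enum_rank_inj/perm_inj. Qed.

Definition is_first pi (A : {set U}) x := [forall u in A, rank pi x <= rank pi u].

Definition preceded pi (S : {set U}) v := [exists u in S, rank pi u <= rank pi v].

Lemma is_first_tperm pi (A : {set U}) x y : x \in A -> y \in A ->
  is_first pi A x -> is_first (tperm x y * pi) A y.
Proof.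
move=> xA yA /forall_inP first_x; apply/forall_inP => u uA.
by rewrite /rank !permM tpermR; apply: first_x; case: tpermP.
Qed.

Lemma card_is_first_eq (A : {set U}) x y : x \in A -> y \in A ->
  #|[set pi | is_first pi A x]| = #|[set pi | is_first pi A y]|.
Proof.
wlog suff: x y / x \in A -> y \in A ->
    #|[set pi | is_first pi A x]| <= #|[set pi | is_first pi A y]|.
  by move=> le xA yA; apply/eqP; rewrite eqn_leq !le.
move=> xA yA; rewrite -(card_imset _ (mulgI (tperm x y))).
apply: subset_leq_card; apply/fintype.subsetP => _ /imsetP[pi first_x ->].
by move: first_x; rewrite !inE; apply: is_first_tperm.
Qed.

Lemma sum_is_first pi (A : {set U}) x0 : x0 \in A ->
  \sum_(x in A) (is_first pi A x : nat) = 1.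
Proof.
move=> x0A; case: (arg_minnP (rank pi) x0A) => m mA min_m.
rewrite (bigD1 m) //= big1 => [|x /andP[xA xm]].
  by have -> : is_first pi A m by apply/forall_inP.
apply/eqP; rewrite eqb0; apply: contra xm => /forall_inP/(_ m mA) le_x_m.
by apply/eqP/(rank_inj (pi := pi))/eqP; rewrite eqn_leq le_x_m min_m.
Qed.

Lemma card_is_first (A : {set U}) x : x \in A ->
  #|A| * #|[set pi | is_first pi A x]| = #|{perm U}|.
Proof.
move=> xA; rewrite -sum_nat_const.
under eq_bigr => y yA do rewrite (card_is_first_eq xA yA) -sum_nat_of_bool.
rewrite exchange_big /= -sum1_card; apply: eq_bigr => pi _.
exact: sum_is_first xA.
Qed.

Lemma preceded_notin pi (S : {set U}) v : v \notin S ->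
  preceded pi S v = ~~ is_first pi (v |: S) v.
Proof.
move=> vS; apply/exists_inP/forall_inPn => [[u uS le_u_v] | [u]].
  exists u; first by rewrite in_setU1 uS orbT.
  by rewrite -ltnNge ltn_neqAle le_u_v andbT; apply: contraNneq vS => /rank_inj <-.
by rewrite in_setU1 => /predU1P[-> | uS]; [rewrite leqnn | rewrite -ltnNge => /ltnW; exists u].
Qed.

Lemma card_preceded_notin (S : {set U}) v : v \notin S ->
  #|S|.+1 * #|[set pi | preceded pi S v]| = #|S| * #|{perm U}|.
Proof.
move=> vS.
have first := card_is_first (setU11 v S); rewrite cardsU1 vS add1n in first.
have split : #|[set pi | preceded pi S v]| + #|[set pi | is_first pi (v |: S) v]|
             = #|{perm U}|.
  rewrite -(cardsC [set pi | preceded pi S v]); congr (_ + _).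
  by apply: eq_card => pi; rewrite !inE preceded_notin // negbK.
nia.
Qed.

Lemma sum_card_preceded (S : {set U}) :
  #|S|.+1 * \sum_v #|[set pi | preceded pi S v]| = #|S| * #|U|.+1 * #|{perm U}|.
Proof.
rewrite (bigID (mem S)) /=.
have -> : \sum_(v in S) #|[set pi | preceded pi S v]| = #|S| * #|{perm U}|.
  rewrite -sum_nat_const; apply: eq_bigr => v vS; apply: eq_card => pi.
  by rewrite !inE; apply/exists_inP; exists v.
rewrite mulnDr big_distrr /= (eq_bigr _ (fun v => card_preceded_notin (S := S) (v := v))).
by rewrite sum_nat_const -mulnDl addSn cardC mulnCA mulnA.
Qed.
End Orderings.

Section Converse.
Variables (K1 K2 N B : nat).
Notation U := ('I_K1 * 'I_K2)%type.
Variables (Z1 : 'I_K1 -> {set 'I_N * 'I_B})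
          (Z2 : 'I_K1 -> 'I_K2 -> {set 'I_N * 'I_B})
          (L : demand K1 K2 N -> nat)
          (X : demand K1 K2 N -> files N B -> seq bool)
          (Y : demand K1 K2 N -> 'I_K1 -> seq bool -> files N B -> seq bool)
          (D : demand K1 K2 N -> 'I_K1 -> 'I_K2 -> seq bool -> files N B ->
                 {ffun 'I_B -> bool}).
Hypothesis X_size : forall d w, size (X d w) = L d.
Hypothesis Y_local : forall d k1 x, depends_only_on (Z1 k1) (Y d k1 x).
Hypothesis D_local : forall d k1 k2 y, depends_only_on (Z2 k1 k2) (D d k1 k2 y).
Hypothesis D_correct : forall d w k1 k2,
  D d k1 k2 (Y d k1 (X d w) w) w = [ffun b => w (d (k1, k2), b)].

Definition cache (u : U) := Z1 u.1 :|: Z2 u.1 u.2.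

Definition cachers (p : 'I_N * 'I_B) : {set U} := [set u | p \in cache u].

Definition genie_bits (d : demand K1 K2 N) (rho : U -> nat) := [set p : 'I_N * 'I_B |
  [exists v, (p.1 == d v) && [exists u in cachers p, rho u <= rho v]]].

(* Decode the users in the order rho: a bit cached by v belongs to an undemanded
   file, to the file of an earlier user (known by induction), or is a genie bit. *)
Lemma genie_decodes d rho (w w' : files N B) :
  X d w = X d w' -> {in genie_bits d rho, w =1 w'} ->
  (forall p, (forall v, p.1 != d v) -> w p = w' p) ->
  forall v b, w (d v, b) = w' (d v, b).
Proof.
move=> eqX eqG eq_undemanded v.
suff: forall k v, rho v < k -> forall b, w (d v, b) = w' (d v, b) by apply; apply: ltnSn.
elim=> [//|k IHk] [k1 k2] lt_v_k.
have eq_cache : {in cache (k1, k2), w =1 w'}.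
  move=> [m b]; case: (pickP (fun v' => m == d v')) => [v' /eqP-> | none] cached.
    case: (ltnP (rho v') (rho (k1, k2))) => [lt_v'_v | le_v_v'].
      by apply: IHk; apply: leq_trans lt_v'_v lt_v_k.
    apply: eqG; rewrite inE; apply/existsP; exists v'; rewrite eqxx.
    by apply/exists_inP; exists (k1, k2) => //; rewrite inE.
  by apply: eq_undemanded => v' /=; rewrite none.
move=> b; have /ffunP/(_ b) := D_correct d w k1 k2.
rewrite eqX (@Y_local d k1 _ w w') => [|p Z1p]; last first.
  by apply: eq_cache; rewrite inE Z1p.
rewrite (@D_local d k1 k2 _ w w') => [|p Z2p]; last first.
  by apply: eq_cache; rewrite inE Z2p orbT.
by rewrite D_correct !ffunE.
Qed.

Lemma genie_bound (d : demand K1 K2 N) (rho : U -> nat) :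
  injective d -> K1 * K2 * B <= L d + #|genie_bits d rho|.
Proof.
move=> inj_d.
(* Undemanded files are all zero, so the 2 ^ (K1 K2 B) values of the demanded
   files are determined by the server message and the genie bits. *)
pose embed (a : {ffun U * 'I_B -> bool}) : files N B :=
  [ffun p => if [pick v | p.1 == d v] is Some v then a (v, p.2) else false].
have embedE a v b : embed a (d v, b) = a (v, b).
  rewrite ffunE /=; case: pickP => [v' /eqP/inj_d-> // | /(_ v)]; by rewrite eqxx.
have embed_undemanded a p : (forall v, p.1 != d v) -> embed a p = false.
  by rewrite ffunE => none; case: pickP => // v; rewrite (negbTE (none v)).
pose code a := X d (embed a) ++ [seq embed a p | p <- enum (genie_bits d rho)].
have size_code a : size (code a) = L d + #|genie_bits d rho|.
  by rewrite size_cat X_size size_map -cardE.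
have inj_code : injective code.
  move=> a a' /eqP; rewrite eqseq_cat ?X_size // => /andP[/eqP eqX /eqP eqG].
  apply/ffunP => -[v b]; rewrite -!embedE.
  apply: (@genie_decodes d rho _ _ eqX) => [p pG | p none].
    by move/eq_in_map: eqG; apply; rewrite mem_enum.
  by rewrite !embed_undemanded.
have := leq_card_bitseq size_code inj_code.
by rewrite card_ffun card_bool !card_prod !card_ord leq_exp2l.
Qed.

Lemma card_genie_bits_le d rho : #|genie_bits d rho| <=
  \sum_p \sum_v ((p.1 == d v) && [exists u in cachers p, rho u <= rho v]).
Proof.
rewrite -sum_nat_of_bool; apply: leq_sum => p _; rewrite sum_nat_of_bool.
by case: existsP => [[v Qv] | //]; apply/card_gt0P; exists v; rewrite inE.
Qed.

Hypotheses (N_gt0 : 0 < N) (KN : K1 * K2 <= N).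

Definition cyclic_demand (c : 'I_N) : demand K1 K2 N :=
  [ffun v => Ordinal (ltn_pmod (c + enum_rank v) N_gt0)].

Lemma cyclic_demand_inj c : injective (cyclic_demand c).
Proof.
have lt_rank_N (v : U) : enum_rank v < N.
  have lt_rank := ltn_ord (enum_rank v).
  by apply: leq_trans lt_rank _; rewrite card_prod !card_ord.
move=> u v; rewrite !ffunE => /(congr1 val) /= /eqP.
by rewrite eqn_modDl !modn_small // => /eqP/val_inj/enum_rank_inj.
Qed.

Lemma sum_cyclic_demand_eq1 v (n : 'I_N) : \sum_c (n == cyclic_demand c v : nat) = 1.
Proof.
have inj : injective (fun c => cyclic_demand c v).
  move=> c c'; rewrite !ffunE => /(congr1 val) /= /eqP.
  by rewrite eqn_modDr !modn_small // => /eqP/val_inj.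
rewrite sum_nat_of_bool -(cards1 n) -(@card_preimset _ _ [set n] inj).
by apply: eq_card => c; rewrite !inE eq_sym.
Qed.

Lemma converse_count : #|{perm U}| * (N * (K1 * K2 * B)) <=
  #|{perm U}| * (N * \max_d L d) + \sum_p \sum_v #|[set pi | preceded pi (cachers p) v]|.
Proof.
have cyclic_bound c pi : K1 * K2 * B <= \max_d L d +
    \sum_p \sum_v ((p.1 == cyclic_demand c v) && preceded pi (cachers p) v).
  apply: leq_trans (genie_bound (rank pi) (@cyclic_demand_inj c)) _.
  by rewrite leq_add ?leq_bigmax ?card_genie_bits_le.
have average pi : N * (K1 * K2 * B) <=
    N * \max_d L d + \sum_p \sum_v (preceded pi (cachers p) v : nat).
  have := leq_sum (index_enum 'I_N) (fun c (_ : true) => cyclic_bound c pi).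
  rewrite sum_nat_const card_ord big_split /= sum_nat_const card_ord => /leq_trans.
  apply; rewrite leq_add2l exchange_big leq_sum // => p _.
  rewrite exchange_big leq_sum // => v _.
  case: (preceded _ _ _); last by rewrite big1 // => c; rewrite andbF.
  by under eq_bigr do rewrite andbT; rewrite sum_cyclic_demand_eq1.
have := leq_sum (index_enum {perm U}) (fun pi (_ : true) => average pi).
rewrite sum_nat_const big_split /= sum_nat_const => /leq_trans.
apply; rewrite leq_add2l exchange_big leq_sum // => p _.
by rewrite exchange_big leq_sum // => v _; rewrite sum_nat_of_bool.
Qed.

Lemma sum_card_cachers : \sum_p #|cachers p| = \sum_u #|cache u|.
Proof.
under eq_bigr do rewrite -sum_nat_of_bool.
rewrite exchange_big; apply: eq_bigr => u _; rewrite -sum_nat_of_bool.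
by apply: eq_bigr => p _; rewrite inE.
Qed.

Local Open Scope ring_scope.

Lemma converse_average (R : realFieldType) :
  ((N * (K1 * K2 * B))%:R : R) <= (N * \max_d L d)%:R +
    \sum_p #|cachers p|%:R * ((K1 * K2)%:R + 1) / (#|cachers p|%:R + 1).
Proof.
set P := #|{perm U}|.
have P_gt0 : 0 < P%:R :> R by rewrite ltr0n; apply/card_gt0P; exists 1%g.
have count := converse_count.
rewrite -(ler_nat R) natrD natr_sum in count.
rewrite -(ler_pM2l P_gt0) mulrDr mulr_sumr -!natrM.
apply: le_trans count _; rewrite lerD2l ler_sum // => p _.
set s := #|cachers p|.
have s1 : s%:R + 1 != 0 :> R by rewrite gt_eqF // ltr_wpDl.
have := sum_card_preceded (cachers p); rewrite card_prod !card_ord.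
move=> /(congr1 (fun n => n%:R : R)); rewrite !natrM natr_sum -!natr1 => sum_pre.
by rewrite le_eqVlt; apply/orP; left; apply/eqP; apply: (mulfI s1); rewrite sum_pre; field.
Qed.
End Converse.

Local Open Scope ring_scope.

Lemma binS_ratio (R : numFieldType) (n m : nat) : (m <= n)%N ->
  'C(n, m.+1)%:R / 'C(n, m)%:R = (n%:R - m%:R) / m.+1%:R :> R.
Proof.
move=> le_m_n; have := mul_bin_left n m; move/(congr1 (fun k => k%:R : R)).
rewrite !natrM natrB // => eq_bin.
have C_neq0 : 'C(n, m)%:R != 0 :> R by rewrite pnatr_eq0 -lt0n bin_gt0.
by apply/eqP; rewrite eqr_div ?C_neq0 ?pnatr_eq0 // mulrC eq_bin.
Qed.

Lemma achievable_memory_point (R : realType) (K1 K2 t N : nat) (M1 M2 : R) :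
  (0 < t)%N -> (K2 <= t)%N -> (t < K1 * K2)%N -> (0 < N)%N ->
  M1 / N%:R = 'C(K1 * K2 - K2, t - K2)%:R / 'C(K1 * K2, t)%:R ->
  M2 / N%:R = t%:R / (K1 * K2)%:R - 'C(K1 * K2 - K2, t - K2)%:R / 'C(K1 * K2, t)%:R ->
  achievable_load K1 K2 N M1 M2 (((K1 * K2)%:R - t%:R) / t.+1%:R).
Proof.
move=> t_gt0 K2_le_t t_lt_K N_gt0 HM1 HM2.
have bounds : (K2 <= t <= K1 * K2)%N by rewrite K2_le_t ltnW.
have C_neq0 : 'C(K1 * K2, t)%:R != 0 :> R by rewrite pnatr_eq0 -lt0n bin_gt0 ltnW.
have N_neq0 : N%:R != 0 :> R by rewrite pnatr_eq0 -lt0n.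
have K_neq0 : (K1 * K2)%:R != 0 :> R by rewrite pnatr_eq0 -lt0n (leq_ltn_trans _ t_lt_K).
have [K1_neq0 K2_neq0] : K1%:R != 0 :> R /\ K2%:R != 0 :> R.
  by apply/andP; rewrite -negb_or -mulf_eq0 -natrM.
have diag : 'C(K1 * K2 - 1, t - 1)%:R = t%:R * 'C(K1 * K2, t)%:R / (K1 * K2)%:R :> R.
  have diag_nat : (K1 * K2 * 'C(K1 * K2 - 1, t - 1) = t * 'C(K1 * K2, t))%N.
    by rewrite subn1 mul_bin_diag subn1 prednK.
  by rewrite -natrM -diag_nat natrM mulrC mulKf.
have [T0 T0_label] : exists T0, T0 \in labels K1 K2 t.
  by apply/card_gt0P; rewrite card_labels bin_gt0 ltnW.
rewrite -(binS_ratio _ (ltnW t_lt_K)) -(card_coded_labels K1 K2 t) -(card_labels K1 K2 t).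
apply: (scheme_achievable T0_label N_gt0) => [k1 | k1 k2].
  rewrite card_mirror_cache // card_labels.
  suff -> : M1 * 'C(K1 * K2, t)%:R = (N * 'C(K1 * K2 - K2, t - K2))%:R by rewrite lexx.
  by rewrite natrM -(mulfVK N_neq0 M1) HM1; field.
rewrite -(lerD2r ((N * 'C(K1 * K2 - K2, t - K2))%:R)) -natrD card_user_cache // card_labels.
suff -> : M2 * 'C(K1 * K2, t)%:R + (N * 'C(K1 * K2 - K2, t - K2))%:R
        = (N * 'C(K1 * K2 - 1, t - 1))%:R by rewrite lexx.
by rewrite 2![(N * _)%:R]natrM diag -(mulfVK N_neq0 M2) HM2; field; apply/and3P.
Qed.

(* The right-hand side is the tangent at t of the concave map s |-> s (K+1) / (s+1). *)
Lemma saturation_tangent_le (R : realFieldType) (K t s : R) :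
  0 <= K -> 0 <= t -> 0 <= s ->
  s * (K + 1) / (s + 1) <= t * (K + 1) / (t + 1) + (K + 1) / (t + 1) ^+ 2 * (s - t).
Proof.
move=> K_ge0 t_ge0 s_ge0.
have s1 : s + 1 != 0 by rewrite gt_eqF // ltr_wpDl.
have t1 : t + 1 != 0 by rewrite gt_eqF // ltr_wpDl.
rewrite -subr_ge0.
have -> : t * (K + 1) / (t + 1) + (K + 1) / (t + 1) ^+ 2 * (s - t) - s * (K + 1) / (s + 1)
   = (K + 1) * (s - t) ^+ 2 / ((s + 1) * (t + 1) ^+ 2) by field; rewrite s1 t1.
by apply: divr_ge0; apply: mulr_ge0; rewrite ?sqr_ge0 //; lra.
Qed.

Lemma sum_saturation_le (R : realFieldType) (I : finType) (s : I -> R) (K t : R) :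
  0 <= K -> 0 <= t -> (forall i, 0 <= s i) -> \sum_i s i <= #|I|%:R * t ->
  \sum_i s i * (K + 1) / (s i + 1) <= #|I|%:R * (t * (K + 1) / (t + 1)).
Proof.
move=> K_ge0 t_ge0 s_ge0 sum_s.
set slope := (K + 1) / (t + 1) ^+ 2.
apply: le_trans (_ : \sum_i (t * (K + 1) / (t + 1) + slope * (s i - t)) <= _).
  by apply: ler_sum => i _; apply: saturation_tangent_le.
rewrite big_split /= sumr_const -mulr_sumr sumrB sumr_const mulr_natl gerDl.
apply: mulr_ge0_le0; last by rewrite subr_le0 -mulr_natl.
by rewrite divr_ge0 ?sqr_ge0 //; lra.
Qed.

Lemma converse_load (R : realType) (K1 K2 N : nat) (M1 M2 t r : R) :
  (0 < N)%N -> (K1 * K2 <= N)%N -> 0 <= t ->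
  (M1 + M2) * (K1 * K2)%:R <= N%:R * t ->
  achievable_load K1 K2 N M1 M2 r -> ((K1 * K2)%:R - t) / (t + 1) <= r.
Proof.
move=> N_gt0 KN t_ge0 budget [B [B_gt0 [Z1 [Z2 [L [X [Y [D]]]]]]]].
move=> [Z1_size [Z2_size [X_size [Y_local [D_local [D_correct ->]]]]]].
have avg := converse_average X_size Y_local D_local D_correct N_gt0 KN R.
set K : R := (K1 * K2)%:R.
have cached : \sum_p (#|cachers Z1 Z2 p|%:R : R) <= #|{: 'I_N * 'I_B}|%:R * t.
  rewrite -natr_sum sum_card_cachers natr_sum card_prod !card_ord natrM.
  apply: le_trans (_ : \sum_(u : 'I_K1 * 'I_K2) (M1 * B%:R + M2 * B%:R) <= _).
    apply: ler_sum => u _; apply: le_trans (_ : (#|Z1 u.1| + #|Z2 u.1 u.2|)%:R <= _).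
      by rewrite ler_nat cardsU leq_subr.
    by rewrite natrD lerD.
  rewrite sumr_const card_prod !card_ord -mulrDl -[_ *+ (K1 * K2)]mulr_natr.
  by rewrite mulrAC [X in _ <= X]mulrAC; apply: ler_wpM2r.
have := sum_saturation_le (ler0n R (K1 * K2)) t_ge0 (fun p => ler0n _ _) cached.
rewrite card_prod !card_ord [(N * B)%:R]natrM => saturated.
have t1 : t + 1 != 0 by rewrite gt_eqF // ltr_wpDl.
have Np : 0 < N%:R :> R by rewrite ltr0n.
set F := t * (K + 1) / (t + 1).
have -> : (K - t) / (t + 1) = K - F by rewrite /F; field.
rewrite ler_pdivlMr ?ltr0n // -(ler_pM2l Np).
have -> : N%:R * ((K - F) * B%:R) = N%:R * (K * B%:R) - N%:R * B%:R * F by ring.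
rewrite lerBlDr; apply: le_trans (_ : (N * (K1 * K2 * B))%:R <= _).
  by rewrite /K -!natrM.
by apply: le_trans avg _; rewrite natrM lerD2l.
Qed.

Lemma inf_attained (R : realType) (E : set R) x : E x -> lbound E x -> inf E = x.
Proof.
move=> Ex lbx; apply/eqP; rewrite eq_le; apply/andP; split.
  exact: (ge_inf (ex_intro _ x lbx) Ex).
exact: (lb_le_inf (ex_intro _ x Ex) lbx).
Qed.

Theorem corollary1 (R : realType) (K1 K2 t N : nat) (M1 M2 : R) :
  (0 < K1)%N -> (0 < K2)%N -> (0 < t)%N ->
  (K2 < t)%N -> (t < K1 * K2)%N -> (K1 * K2 <= N)%N ->
  M1 / N%:R = ('C(K1 * K2 - K2, t - K2))%:R / ('C(K1 * K2, t))%:R ->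
  M2 / N%:R = t%:R / (K1 * K2)%:R
              - ('C(K1 * K2 - K2, t - K2))%:R / ('C(K1 * K2, t))%:R ->
  R1_star K1 K2 N M1 M2
    = (K1 * K2)%:R * (1 - (M1 + M2) / N%:R)
        / ((K1 * K2)%:R * ((M1 + M2) / N%:R) + 1)
  /\ (K1 * K2)%:R * (1 - (M1 + M2) / N%:R)
        / ((K1 * K2)%:R * ((M1 + M2) / N%:R) + 1)
     = ((K1 * K2)%:R - t%:R) / (t.+1)%:R.
Proof.
move=> K1_gt0 K2_gt0 t_gt0 K2_lt_t t_lt_K KN HM1 HM2.
have N_gt0 : (0 < N)%N by apply: leq_trans KN; rewrite muln_gt0 K1_gt0.
have N_neq0 : N%:R != 0 :> R by rewrite pnatr_eq0 -lt0n.
have K1_neq0 : K1%:R != 0 :> R by rewrite pnatr_eq0 -lt0n.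
have K2_neq0 : K2%:R != 0 :> R by rewrite pnatr_eq0 -lt0n.
have memory : (M1 + M2) / N%:R = t%:R / (K1 * K2)%:R by rewrite mulrDl HM1 HM2 addrC subrK.
have load : (K1 * K2)%:R * (1 - (M1 + M2) / N%:R)
              / ((K1 * K2)%:R * ((M1 + M2) / N%:R) + 1)
            = ((K1 * K2)%:R - t%:R) / t.+1%:R :> R.
  by rewrite memory -natr1; field; rewrite natr1 pnatr_eq0 K1_neq0 K2_neq0.
split=> //; rewrite load; apply: inf_attained.
  exact: achievable_memory_point t_gt0 (ltnW K2_lt_t) t_lt_K N_gt0 HM1 HM2.
move=> r /converse_load; rewrite -natr1; apply => //.
suff -> : (M1 + M2) * (K1 * K2)%:R = N%:R * t%:R by [].
by rewrite -(mulfVK N_neq0 (M1 + M2)) memory; field; apply/andP.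
Qed.
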